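(* Let $\alpha, \beta, \gamma, a, b$ be integers such that $p = \alpha^2 a^2 + 2\beta a b + \gamma b^2$ is a prime number, and put $m = \alpha^2\gamma - \beta^2$. Then: (i) the conic $p x^2 - m y^2 = z^2$ has the rational point $(x,y,z) = (\alpha, b, \alpha^2 a + \beta b)$, and hence infinitely many rational points (pairwise non-proportional nonzero rational solutions $(x,y,z)$); (ii) if, in addition, $m$ is a prime with $m \equiv 1 \pmod 8$ and $\alpha$ is a prime with $\alpha \equiv 3 \pmod 4$, then the equation $p x^4 - m y^4 = z^2$ has no rational solutions other than $x=y=z=0$. *)

From mathcomp Require Import all_boot all_order all_algebra.
Set Implicit Arguments. Unset Strict Implicit. Unset Printing Implicit Defensive.
Import Order.TTheory GRing.Theory Num.Theory.
Local Open Scope ring_scope.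

Definition zprime (z : int) : bool := (0 < z) && prime `|z|%N.

Definition proportional (u v : rat * rat * rat) : Prop :=
  exists l : rat, v.1.1 = l * u.1.1 /\ v.1.2 = l * u.1.2 /\ v.2 = l * u.2.

Definition nonzero3 (u : rat * rat * rat) : Prop :=
  ~ (u.1.1 = 0 /\ u.1.2 = 0 /\ u.2 = 0).

Definition on_conic (c1 c2 : int) (u : rat * rat * rat) : Prop :=
  c1%:~R * u.1.1 ^+ 2 - c2%:~R * u.1.2 ^+ 2 = u.2 ^+ 2.

Definition infinitely_many_points (c1 c2 : int) : Prop :=
  exists f : nat -> rat * rat * rat,
    (forall n, nonzero3 (f n) /\ on_conic c1 c2 (f n)) /\
    (forall i j, i <> j -> ~ proportional (f i) (f j)).

From mathcomp Require Import all_boot all_order all_algebra.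
From mathcomp Require Import zify ring lra.
Import Order.TTheory GRing.Theory Num.Theory.

(* Part (i): with c = alpha^2 a + beta b one has alpha^2 p = c^2 + m b^2, so (alpha, b, c)
   lies on the conic p x^2 - m y^2 = z^2, and a conic with one rational point has infinitely
   many: the lines through that point cut it again in rational points.

   Part (ii): a rational solution with x <> 0 gives a primitive integer solution
   p X^4 - m Y^4 = Z^2. In Z[sqrt(-m)], the product of eps c + b sqrt(-m) (norm alpha^2 p)
   and Z - Y^2 sqrt(-m) (norm p X^4) is divisible by p once the sign eps is chosen well;
   the quotient A1 + B1 sqrt(-m) has norm (alpha X^2)^2, and gcd(A1, B1) divides alpha^2
   but is not alpha, so it is 1 or alpha^2, in particular 1 mod 4. For a prime m = 1 mod 8,
   the parametrization of the primitive solutions of A^2 + m B^2 = N^2 shows that N = 1 mod 4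
   whenever gcd(A, B) = 1 mod 4, whereas alpha X^2 is 0 or 3 mod 4. *)

Lemma sqrn_mod4 (u : nat) : (u ^ 2 %% 4 = odd u)%N.
Proof. nia. Qed.

Lemma odd_sqrn_mod8 {r : nat} : odd r -> (r ^ 2 %% 8 = 1)%N.
Proof.
move=> r_odd; rewrite -modnXm.
have : (r %% 8 = 1 \/ r %% 8 = 3 \/ r %% 8 = 5 \/ r %% 8 = 7)%N by lia.
by case=> [->|[->|[->|->]]].
Qed.

Lemma modnM_eq1l {d k : nat} (n : nat) : (k %% d = 1)%N -> (k * n = n %[mod d])%N.
Proof. by move=> k1; rewrite -modnMml k1 mul1n. Qed.

Lemma sqr_dvdn_prime {p d : nat} : prime p -> (d ^ 2 %| p)%N -> d = 1%N.
Proof.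
move=> p_prime d2p; have /primeP[p_gt1 dvd_p] := p_prime.
have /dvd_p/orP[/eqP // | /eqP d_eq] : (d %| p)%N by apply: dvdn_trans d2p; rewrite dvdn_exp.
by move: d2p; rewrite d_eq => /(dvdn_leq (ltnW p_gt1)); nia.
Qed.

Lemma coprime_mul_eq_sqr {x y k : nat} :
  coprime x y -> (x * y = k ^ 2)%N -> x = (gcdn x k ^ 2)%N.
Proof.
move=> cxy xy.
have -> : (gcdn x k ^ 2 = gcdn (gcdn (x * x) (x * k)) (gcdn (k * x) (k * k)))%N.
  by rewrite -mulnn muln_gcdl -!muln_gcdr.
rewrite [k * k]mulnn -xy [k * x]mulnC -!muln_gcdr.
suff -> : gcdn (gcdn x k) (gcdn k y) = 1%N by rewrite muln1.
apply/eqP; rewrite -dvdn1 -(eqP cxy) dvdn_gcd.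
by rewrite (dvdn_trans (dvdn_gcdl _ _) (dvdn_gcdl _ _))
           (dvdn_trans (dvdn_gcdr _ _) (dvdn_gcdr _ _)).
Qed.

Lemma coprime_mul_eq_prime_sqr {m u v k : nat} : prime m -> coprime u v ->
  (u * v = m * k ^ 2)%N ->
  exists r s, (u = m * r ^ 2 /\ v = s ^ 2 \/ u = r ^ 2 /\ v = m * s ^ 2)%N.
Proof.
move=> m_prime cuv uv; have m_gt0 := prime_gt0 m_prime.
have : (m %| u * v)%N by rewrite uv dvdn_mulr.
rewrite Euclid_dvdM // => /orP[/dvdnP[u' u_eq] | /dvdnP[v' v_eq]].
- have u'v : (u' * v = k ^ 2)%N.
    by apply/eqP; rewrite -(eqn_pmul2l m_gt0) -uv u_eq mulnA (mulnC m).
  have cu'v : coprime u' v by apply: coprime_dvdl cuv; rewrite u_eq dvdn_mulr.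
  exists (gcdn u' k), (gcdn v k); left; split.
    by rewrite u_eq mulnC -(coprime_mul_eq_sqr cu'v u'v).
  by apply: (@coprime_mul_eq_sqr v u' k); rewrite 1?coprime_sym // mulnC.
- have uv' : (u * v' = k ^ 2)%N.
    by apply/eqP; rewrite -(eqn_pmul2l m_gt0) -uv v_eq mulnCA (mulnC m).
  have cuv' : coprime u v' by apply: coprime_dvdr cuv; rewrite v_eq dvdn_mulr.
  exists (gcdn u k), (gcdn v' k); right; split; first exact: coprime_mul_eq_sqr uv'.
  by rewrite v_eq mulnC -(@coprime_mul_eq_sqr v' u k); rewrite 1?coprime_sym // mulnC.
Qed.

Section PrimitiveNorm.

Variables m A B N : nat.
Hypotheses (m_prime : prime m) (m_mod8 : (m %% 8 = 1)%N) (coAB : coprime A B).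
Hypothesis norm_eq : (A ^ 2 + m * B ^ 2 = N ^ 2)%N.

Let m_mod4 : (m %% 4 = 1)%N. Proof. lia. Qed.

Lemma norm_le : (A <= N)%N.
Proof. by rewrite -(@leq_exp2r _ _ 2) // -norm_eq leq_addr. Qed.

Lemma norm_coprime : coprime A N.
Proof.
set d := gcdn A N; have dA : (d %| A)%N := dvdn_gcdl A N.
have d2m : (d ^ 2 %| m)%N.
  have cdB : coprime (d ^ 2) (B ^ 2) by rewrite coprimeXl // coprimeXr // (coprime_dvdl dA).
  rewrite -(Gauss_dvdl _ cdB).
  have -> : (m * B ^ 2 = N ^ 2 - A ^ 2)%N by lia.
  by rewrite dvdn_sub // dvdn_exp2r // dvdn_gcdr.
by rewrite /coprime -/d (sqr_dvdn_prime m_prime d2m).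
Qed.

Lemma norm_mod4_oddl : odd A -> (N %% 4 = 1)%N.
Proof.
move=> A_odd.
have [B_even N_odd] : ~~ odd B /\ odd N.
  by have := sqrn_mod4 A; have := sqrn_mod4 B; have := sqrn_mod4 N;
     have := modnM_eq1l (B ^ 2) m_mod4; lia.
have [B' B_eq] : exists B', B = (B' * 2)%N by exists (B %/ 2); lia.
have [u N_eq] : exists u, N = (u * 2 + A)%N by exists ((N - A) %/ 2); have := norm_le; lia.
have uv : (u * (u + A) = m * B' ^ 2)%N by move: norm_eq; rewrite N_eq B_eq; nia.
have cuv : coprime u (u + A).
  rewrite /coprime gcdnDl gcdnC -/(coprime A u).
  by have := norm_coprime; rewrite N_eq /coprime gcdnDr -/(coprime A (u * 2)) coprimeMr => /andP[].
have [r [s [[u_eq uA_eq] | [u_eq uA_eq]]]] := coprime_mul_eq_prime_sqr m_prime cuv uv.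
- by have := sqrn_mod4 r; have := sqrn_mod4 s; have := modnM_eq1l (r ^ 2) m_mod4; lia.
- by have := sqrn_mod4 r; have := sqrn_mod4 s; have := modnM_eq1l (s ^ 2) m_mod4; lia.
Qed.

Lemma norm_mod4_evenl : ~~ odd A -> (N %% 4 = 1)%N.
Proof.
move=> A_even.
have B_odd : odd B.
  apply: contraT => B_even.
  have : (2 %| gcdn A B)%N by rewrite dvdn_gcd !dvdn2 A_even B_even.
  by rewrite (eqP coAB).
have N_odd : odd N.
  by have := sqrn_mod4 A; have := sqrn_mod4 B; have := sqrn_mod4 N;
     have := modnM_eq1l (B ^ 2) m_mod4; lia.
have [x N_eq] : exists x, N = (x + A)%N by exists (N - A); have := norm_le; lia.
have xy : (x * (x + A * 2) = m * B ^ 2)%N by move: norm_eq; rewrite N_eq; nia.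
have x_odd : odd x by lia.
have y_odd : odd (x + A * 2) by rewrite oddD x_odd oddM andbF.
have cxy : coprime x (x + A * 2).
  rewrite /coprime gcdnDl -/(coprime x (A * 2)) coprimeMr coprimen2 x_odd andbT coprime_sym.
  by move: norm_coprime; rewrite N_eq /coprime gcdnDr.
have [r [s [[x_eq y_eq] | [x_eq y_eq]]]] := coprime_mul_eq_prime_sqr m_prime cxy xy.
- have r_odd : odd r by move: x_odd; rewrite x_eq oddM oddX => /andP[].
  have s_odd : odd s by move: y_odd; rewrite y_eq oddX.
  have := odd_sqrn_mod8 r_odd; have := odd_sqrn_mod8 s_odd.
  have := modnM_eq1l (r ^ 2) m_mod8; lia.
- have r_odd : odd r by move: x_odd; rewrite x_eq oddX.
  have s_odd : odd s by move: y_odd; rewrite y_eq oddM oddX => /andP[].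
  have := odd_sqrn_mod8 r_odd; have := odd_sqrn_mod8 s_odd.
  have := modnM_eq1l (s ^ 2) m_mod8; lia.
Qed.

Lemma primitive_norm_mod4 : (N %% 4 = 1)%N.
Proof. by case: (boolP (odd A)); [exact: norm_mod4_oddl | exact: norm_mod4_evenl]. Qed.

End PrimitiveNorm.

Lemma norm_mod4 {m A B N : nat} : prime m -> (m %% 8 = 1)%N -> (0 < N)%N ->
  (gcdn A B %% 4 = 1)%N -> (A ^ 2 + m * B ^ 2 = N ^ 2)%N -> (N %% 4 = 1)%N.
Proof.
move=> m_prime m_mod8 N_gt0; set g := gcdn A B => g_mod4 norm_eq.
have g_gt0 : (0 < g)%N by lia.
have /dvdnP[A' A_eq] : (g %| A)%N := dvdn_gcdl A B.
have /dvdnP[B' B_eq] : (g %| B)%N := dvdn_gcdr A B.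
have coAB' : coprime A' B'.
  by rewrite /coprime -(eqn_pmul2r g_gt0) mul1n muln_gcdl -A_eq -B_eq.
have N2_eq : (N ^ 2 = (A' ^ 2 + m * B' ^ 2) * g ^ 2)%N.
  by rewrite -norm_eq A_eq B_eq; ring.
have /dvdnP[N' N_eq] : (g %| N)%N by rewrite -(@dvdn_pexp2r _ _ 2) // N2_eq dvdn_mull.
have N'_mod4 : (N' %% 4 = 1)%N.
  apply: (primitive_norm_mod4 _ _ _ _ m_prime m_mod8 coAB').
  apply/eqP; rewrite -(@eqn_pmul2r (g ^ 2)) ?expn_gt0 ?g_gt0 //.
  by rewrite -expnMn -N_eq N2_eq.
by rewrite N_eq -modnMm N'_mod4 g_mod4.
Qed.

Local Open Scope ring_scope.

Lemma sqrz_mod4 (u : int) : (u ^+ 2 %% 4)%Z = (u %% 2)%Z.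
Proof. nia. Qed.

Lemma modzM_eq1l {d k : int} (n : int) : (k %% d)%Z = 1 -> (k * n = n %[mod d])%Z.
Proof. by move=> k1; rewrite -modzMml k1 mul1r. Qed.

Lemma sqr_addM_mod4 {k : int} (u v : int) :
  (k %% 4)%Z = 1 -> ((u ^+ 2 + k * v ^+ 2) %% 4)%Z != 3.
Proof.
by move=> k1; have := sqrz_mod4 u; have := sqrz_mod4 v; have := modzM_eq1l (v ^+ 2) k1; lia.
Qed.

Lemma Euclidz_dvdM (q x y : int) : prime `|q| -> (q %| x * y)%Z = (q %| x)%Z || (q %| y)%Z.
Proof. by move=> q_prime; rewrite !dvdzE abszM Euclid_dvdM. Qed.

Lemma Euclidz_dvdX (q x : int) (n : nat) :
  prime `|q| -> (q %| x ^+ n)%Z = (q %| x)%Z && (0 < n)%N.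
Proof. by move=> q_prime; rewrite !dvdzE abszX Euclid_dvdX. Qed.

Lemma zprime_dvd_eq {q r : int} : zprime q -> zprime r -> (q %| r)%Z -> q = r.
Proof.
move=> /andP[q_gt0 q_prime] /andP[r_gt0 r_prime].
rewrite dvdzE dvdn_prime2 // => /eqP qr.
by rewrite -(gtz0_abs q_gt0) -(gtz0_abs r_gt0) qr.
Qed.

Lemma sqr_dvdz_zprime {q d : int} : zprime q -> (d ^+ 2 %| q)%Z -> `|d|%N = 1%N.
Proof. by move=> /andP[_ q_prime]; rewrite dvdzE abszX => /(sqr_dvdn_prime q_prime). Qed.

Lemma zprime_coprimez {q r : int} : zprime q -> zprime r -> q != r -> coprimez q r.
Proof.
move=> q_zprime r_zprime qr; have /andP[_ q_prime] := q_zprime.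
rewrite coprimezE prime_coprime // -dvdzE.
by apply: contraNN qr => /(zprime_dvd_eq q_zprime r_zprime) ->.
Qed.

Lemma norm_eq_absz {A B N m : int} : 0 <= m -> A ^+ 2 + m * B ^+ 2 = N ^+ 2 ->
  (`|A| ^ 2 + `|m| * `|B| ^ 2 = `|N| ^ 2)%N.
Proof.
move=> m_ge0 norm_eq; apply/eqP; rewrite -(eqr_nat int) natrD natrM.
by rewrite -!abszX !natz !abszE !ger0_norm ?sqr_ge0 // norm_eq.
Qed.

Section QuarticDescent.

Variables alpha beta gamma a b p m : int.
Hypothesis p_eq : p = alpha ^+ 2 * a ^+ 2 + 2 * beta * a * b + gamma * b ^+ 2.
Hypothesis m_eq : m = alpha ^+ 2 * gamma - beta ^+ 2.
Hypotheses (p_zprime : zprime p) (m_zprime : zprime m) (alpha_zprime : zprime alpha).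
Hypotheses (m_mod8 : (m %% 8)%Z = 1) (alpha_mod4 : (alpha %% 4)%Z = 3).

Let c := alpha ^+ 2 * a + beta * b.

Let p_prime : prime `|p|. Proof. by case/andP: p_zprime. Qed.
Let alpha_prime : prime `|alpha|. Proof. by case/andP: alpha_zprime. Qed.
Let p_neq0 : p != 0. Proof. by case/andP: p_zprime => /lt0r_neq0. Qed.
Let m_mod4 : (m %% 4)%Z = 1. Proof. lia. Qed.
Let alpha_gt0 : 0 < alpha. Proof. by case/andP: alpha_zprime. Qed.

Lemma alpha_norm : alpha ^+ 2 * p = c ^+ 2 + m * b ^+ 2.
Proof. by rewrite p_eq m_eq /c; ring. Qed.

Lemma p_neq_alpha : p != alpha.
Proof.
have alpha2_mod4 : (alpha ^+ 2 %% 4)%Z = 1 by rewrite sqrz_mod4; lia.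
apply/eqP => p_alpha; have := sqr_addM_mod4 c b m_mod4.
by rewrite -alpha_norm p_alpha (modzM_eq1l _ alpha2_mod4) alpha_mod4 eqxx.
Qed.

Lemma alpha_ndvd_beta : ~~ (alpha %| beta)%Z.
Proof.
apply/negP => /dvdzP[k be_eq].
have : (alpha ^+ 2 %| m)%Z by rewrite m_eq be_eq; apply/dvdzP; exists (gamma - k ^+ 2); ring.
by move/(sqr_dvdz_zprime m_zprime) => alpha1; move: alpha_prime; rewrite alpha1.
Qed.

Lemma alpha_ndvd_b : ~~ (alpha %| b)%Z.
Proof.
apply/negP => /dvdzP[k b_eq].
have : (alpha %| p)%Z.
  rewrite p_eq b_eq; apply/dvdzP.
  by exists (alpha * a ^+ 2 + 2 * beta * a * k + gamma * k ^+ 2 * alpha); ring.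
by move/(zprime_dvd_eq alpha_zprime p_zprime)/esym/eqP; rewrite (negPf p_neq_alpha).
Qed.

Lemma p_ndvd_b : ~~ (p %| b)%Z.
Proof.
apply/negP => p_b.
have p_c : (p %| c)%Z.
  suff : (p %| c ^+ 2)%Z by rewrite Euclidz_dvdX // => /andP[].
  have -> : c ^+ 2 = alpha ^+ 2 * p - m * b ^+ 2 by rewrite alpha_norm; ring.
  by rewrite rpredB ?dvdz_mull ?dvdz_exp ?dvdzz.
have : (p * p %| alpha ^+ 2 * p)%Z.
  by rewrite alpha_norm !expr2; apply: rpredD; [exact: dvdz_mul | exact/dvdz_mull/dvdz_mul].
rewrite dvdz_mul2r // Euclidz_dvdX // andbT.
by move/(zprime_dvd_eq p_zprime alpha_zprime)/eqP; rewrite (negPf p_neq_alpha).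
Qed.

Variables X Y Z : int.
Hypotheses (coXY : coprimez X Y) (X_neq0 : X != 0).
Hypothesis quartic_eq : p * X ^+ 4 - m * Y ^+ 4 = Z ^+ 2.

Lemma coprimez_ZY : coprimez Z Y.
Proof.
set g := gcdz Z Y.
have co_gX : coprimez (g ^+ 2) (X ^+ 4).
  rewrite coprimezXl // coprimez_pexpr // coprimezE absz_nat coprime_sym.
  exact: coprime_dvdr (dvdn_gcdr _ _) coXY.
have : (g ^+ 2 %| p * X ^+ 4)%Z.
  have -> : p * X ^+ 4 = Z ^+ 2 + m * (Y ^+ 2 * Y ^+ 2) by rewrite -quartic_eq; ring.
  apply: rpredD; first exact/dvdz_exp2r/dvdz_gcdl.
  exact/dvdz_mull/dvdz_mulr/dvdz_exp2r/dvdz_gcdr.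
by rewrite Gauss_dvdzl // => /(sqr_dvdz_zprime p_zprime); rewrite absz_nat => /eqP.
Qed.

Lemma sign_choice : exists2 eps : int, eps ^+ 2 = 1 & (p %| b * Z - eps * c * Y ^+ 2)%Z.
Proof.
have : (p %| (b * Z - c * Y ^+ 2) * (b * Z + c * Y ^+ 2))%Z.
  have c2 : c ^+ 2 = alpha ^+ 2 * p - m * b ^+ 2 by rewrite alpha_norm; ring.
  have -> : (b * Z - c * Y ^+ 2) * (b * Z + c * Y ^+ 2) =
            p * (b ^+ 2 * X ^+ 4 - alpha ^+ 2 * Y ^+ 4).
    transitivity (b ^+ 2 * Z ^+ 2 - c ^+ 2 * Y ^+ 4); first by ring.
    by rewrite -quartic_eq c2; ring.
  exact/dvdz_mulr/dvdzz.
rewrite Euclidz_dvdM // => /orP[p_dvd | p_dvd]; [exists 1 | exists (-1)].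
- by rewrite expr1n.
- by rewrite mul1r.
- by rewrite sqrrN expr1n.
- by rewrite mulN1r mulNr opprK.
Qed.

Lemma twisted_pair : exists eps A1 B1 : int, [/\ eps ^+ 2 = 1,
  A1 * p = eps * c * Z + m * b * Y ^+ 2 & B1 * p = eps * c * Y ^+ 2 - b * Z].
Proof.
have [eps eps_sqr p_dvd] := sign_choice.
have /dvdzP[B1 B1_eq] : (p %| eps * c * Y ^+ 2 - b * Z)%Z by rewrite -opprB rpredN.
have /dvdzP[A1 A1_eq] : (p %| eps * c * Z + m * b * Y ^+ 2)%Z.
  have : (p %| (eps * c * Z + m * b * Y ^+ 2) * b)%Z.
    have -> : (eps * c * Z + m * b * Y ^+ 2) * b =
        eps * c * (b * Z - eps * c * Y ^+ 2) + (eps ^+ 2 * c ^+ 2 + m * b ^+ 2) * Y ^+ 2.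
      by ring.
    rewrite eps_sqr mul1r -alpha_norm; apply: rpredD; first exact: dvdz_mull.
    exact/dvdz_mulr/dvdz_mull/dvdzz.
  by rewrite Euclidz_dvdM // (negPf p_ndvd_b) orbF.
by exists eps, A1, B1.
Qed.

Section TwistedPair.

Variables eps A1 B1 : int.
Hypothesis eps_sqr : eps ^+ 2 = 1.
Hypothesis A1_eq : A1 * p = eps * c * Z + m * b * Y ^+ 2.
Hypothesis B1_eq : B1 * p = eps * c * Y ^+ 2 - b * Z.

Lemma twisted_norm : A1 ^+ 2 + m * B1 ^+ 2 = (alpha * X ^+ 2) ^+ 2.
Proof.
apply: (mulIf (expf_neq0 2 p_neq0)).
transitivity ((A1 * p) ^+ 2 + m * (B1 * p) ^+ 2); first by ring.
rewrite A1_eq B1_eq.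
transitivity ((eps ^+ 2 * c ^+ 2 + m * b ^+ 2) * (Z ^+ 2 + m * Y ^+ 4)); first by ring.
by rewrite eps_sqr mul1r -alpha_norm -quartic_eq; ring.
Qed.

Lemma gcdz_twisted_dvd : (gcdz A1 B1 %| alpha ^+ 2)%Z.
Proof.
have A1_comb : eps * c * A1 - m * b * B1 = Z * alpha ^+ 2.
  apply: (mulIf p_neq0); transitivity (eps * c * (A1 * p) - m * b * (B1 * p)); first by ring.
  rewrite A1_eq B1_eq; transitivity ((eps ^+ 2 * c ^+ 2 + m * b ^+ 2) * Z); first by ring.
  by rewrite eps_sqr mul1r -alpha_norm; ring.
have B1_comb : b * A1 + eps * c * B1 = Y ^+ 2 * alpha ^+ 2.
  apply: (mulIf p_neq0); transitivity (b * (A1 * p) + eps * c * (B1 * p)); first by ring.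
  rewrite A1_eq B1_eq; transitivity ((eps ^+ 2 * c ^+ 2 + m * b ^+ 2) * Y ^+ 2); first by ring.
  by rewrite eps_sqr mul1r -alpha_norm; ring.
have : (gcdz A1 B1 %| gcdz (Z * alpha ^+ 2) (Y ^+ 2 * alpha ^+ 2))%Z.
  rewrite dvdz_gcd -A1_comb -B1_comb.
  by rewrite rpredB ?rpredD ?dvdz_mull ?dvdz_gcdl ?dvdz_gcdr.
rewrite -mulz_gcdl (eqP (coprimezXr 2 coprimez_ZY)) mul1r.
by rewrite !dvdzE absz_nat.
Qed.

Let W := Z - eps * beta * Y ^+ 2.

Let B1_W : B1 * p = eps * alpha ^+ 2 * a * Y ^+ 2 - b * W.
Proof. by rewrite B1_eq /W /c; ring. Qed.

Lemma alpha_dvd_W : (alpha %| B1)%Z -> (alpha %| W)%Z.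
Proof.
move=> alpha_B1.
have : (alpha %| b * W)%Z.
  have -> : b * W = eps * alpha ^+ 2 * a * Y ^+ 2 - B1 * p by rewrite B1_W; ring.
  apply: rpredB; last exact: dvdz_mulr.
  by apply/dvdzP; exists (eps * alpha * a * Y ^+ 2); ring.
by rewrite Euclidz_dvdM // (negPf alpha_ndvd_b).
Qed.

Lemma alpha_sqr_dvd_W : (alpha %| W)%Z -> (alpha ^+ 2 %| W)%Z.
Proof.
move=> alpha_W; set W' := Z + eps * beta * Y ^+ 2.
have WW' : W * W' = p * X ^+ 4 - alpha ^+ 2 * (gamma * Y ^+ 4).
  transitivity (Z ^+ 2 - eps ^+ 2 * beta ^+ 2 * Y ^+ 4); first by rewrite /W /W'; ring.
  by rewrite eps_sqr -quartic_eq m_eq; ring.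
have alpha_X : (alpha %| X)%Z.
  have : (alpha %| p * X ^+ 4)%Z.
    have -> : p * X ^+ 4 = W * W' + alpha ^+ 2 * (gamma * Y ^+ 4) by rewrite WW'; ring.
    apply: rpredD; first exact: dvdz_mulr.
    by apply/dvdzP; exists (alpha * (gamma * Y ^+ 4)); ring.
  rewrite Euclidz_dvdM // Euclidz_dvdX // andbT => /orP[alpha_p | //].
  by move: p_neq_alpha; rewrite (zprime_dvd_eq alpha_zprime p_zprime alpha_p) eqxx.
have alpha_Y : ~~ (alpha %| Y)%Z.
  apply/negP => alpha_Y.
  have : (`|alpha| %| gcdn `|X| `|Y|)%N by rewrite dvdn_gcd -!dvdzE alpha_X alpha_Y.
  move: coXY; rewrite coprimezE => /eqP ->; rewrite dvdn1 => /eqP alpha1.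
  by move: alpha_prime; rewrite alpha1.
have alpha_W' : ~~ (alpha %| W')%Z.
  apply/negP => alpha_W'.
  have : (alpha %| 2 * eps * beta * Y ^+ 2)%Z.
    have -> : 2 * eps * beta * Y ^+ 2 = W' - W by rewrite /W /W'; ring.
    exact: rpredB.
  rewrite !Euclidz_dvdM // (negPf alpha_ndvd_beta) (negPf alpha_Y) !orbF.
  case/orP => [/(dvdn_leq (isT : (0 < 2)%N)) | /(dvdz_mull eps)].
    by clear -alpha_gt0 alpha_mod4; lia.
  by rewrite -expr2 eps_sqr dvdz1 => /eqP alpha1; move: alpha_prime; rewrite alpha1.
have : (alpha ^+ 2 %| W * W')%Z.
  rewrite WW'; apply: rpredB; last exact/dvdz_mulr/dvdzz.
  by case/dvdzP: alpha_X => x ->; apply/dvdzP; exists (p * x ^+ 4 * alpha ^+ 2); ring.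
by rewrite Gauss_dvdzl // coprimez_pexpl // coprimezE prime_coprime // -dvdzE.
Qed.

Let A1_W : A1 * p = alpha ^+ 2 * (eps * a * Z + gamma * b * Y ^+ 2) + eps * beta * b * W.
Proof.
rewrite A1_eq /W /c m_eq.
transitivity (alpha ^+ 2 * (eps * a * Z + gamma * b * Y ^+ 2)
  + eps * beta * b * (Z - eps * beta * Y ^+ 2) + beta ^+ 2 * b * Y ^+ 2 * (eps ^+ 2 - 1)).
  by ring.
by rewrite eps_sqr subrr mulr0 addr0.
Qed.

Lemma alpha_sqr_dvd_twisted : (alpha %| B1)%Z -> (alpha ^+ 2 %| A1)%Z && (alpha ^+ 2 %| B1)%Z.
Proof.
move=> /alpha_dvd_W /alpha_sqr_dvd_W alpha2_W.
have co_alpha2p : coprimez (alpha ^+ 2) p.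
  by rewrite coprimez_pexpl // zprime_coprimez // eq_sym p_neq_alpha.
rewrite -(Gauss_dvdzl A1 co_alpha2p) -(Gauss_dvdzl B1 co_alpha2p) A1_W B1_W.
apply/andP; split.
- by apply: rpredD; [exact/dvdz_mulr/dvdzz | exact: dvdz_mull].
- apply: rpredB; last exact: dvdz_mull.
  by apply/dvdzP; exists (eps * a * Y ^+ 2); ring.
Qed.

Lemma gcdn_twisted_mod4 : (gcdn `|A1| `|B1| %% 4 = 1)%N.
Proof.
have : (gcdn `|A1| `|B1| %| `|alpha| ^ 2)%N.
  by move: gcdz_twisted_dvd; rewrite dvdzE absz_nat abszX.
case/(dvdn_pfactor _ _ alpha_prime) => -[|[|[|k]]] // _ g_eq; rewrite g_eq //.
- have alpha_B1 : (alpha %| B1)%Z by rewrite dvdzE -(expn1 `|alpha|) -g_eq dvdn_gcdr.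
  have /andP[alpha2_A1 alpha2_B1] := alpha_sqr_dvd_twisted alpha_B1.
  have : (`|alpha| ^ 2 %| `|alpha|)%N.
    by rewrite -{2}(expn1 `|alpha|) -g_eq dvdn_gcd -!abszX -!dvdzE alpha2_A1 alpha2_B1.
  by move/(sqr_dvdn_prime alpha_prime) => alpha1; move: alpha_prime; rewrite alpha1.
- by rewrite sqrn_mod4; clear -alpha_gt0 alpha_mod4; lia.
Qed.

Lemma twisted_pair_absurd : False.
Proof.
have m_ge0 : 0 <= m by case/andP: m_zprime => /ltW.
have := norm_eq_absz m_ge0 twisted_norm; rewrite abszM abszX => norm_eq.
have N_gt0 : (0 < `|alpha| * `|X| ^ 2)%N by rewrite muln_gt0 expn_gt0 !absz_gt0 X_neq0 gt_eqF.
have m_prime : prime `|m| by case/andP: m_zprime.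
have m_mod8N : (`|m| %% 8 = 1)%N by clear -m_ge0 m_mod8; lia.
have alpha_mod4N : (`|alpha| %% 4 = 3)%N by clear -alpha_gt0 alpha_mod4; lia.
have := norm_mod4 m_prime m_mod8N N_gt0 gcdn_twisted_mod4 norm_eq.
by rewrite -modnMm sqrn_mod4 alpha_mod4N; case: odd.
Qed.

End TwistedPair.

Lemma no_coprime_solution : False.
Proof. by have [eps [A1 [B1 []]]] := twisted_pair; apply: twisted_pair_absurd. Qed.

End QuarticDescent.

Arguments no_coprime_solution {alpha beta gamma a b p m} p_eq m_eq p_zprime m_zprime alpha_zprime
  m_mod8 alpha_mod4 {X Y Z}.

Lemma quartic_int_solution {p m : int} {x y z : rat} : x != 0 ->
  p%:~R * x ^+ 4 - m%:~R * y ^+ 4 = z ^+ 2 ->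
  exists X Y Z : int, X != 0 /\ p * X ^+ 4 - m * Y ^+ 4 = Z ^+ 2.
Proof.
move=> x_neq0 quartic_eq.
exists (numq x * (denq y * denq z)), (numq y * (denq x * denq z)),
  (numq z * (denq x * denq y) * (denq x * denq y * denq z)); split.
  by rewrite !mulf_eq0 numq_eq0 (negPf x_neq0) !(negPf (denq_neq0 _)).
apply: (@intr_inj rat); rewrite !intrB !intrM !numqE.
set dx := (denq x)%:~R : rat; set dy := (denq y)%:~R : rat; set dz := (denq z)%:~R : rat.
transitivity ((dx * dy * dz) ^+ 4 * (p%:~R * x ^+ 4 - m%:~R * y ^+ 4)); first by ring.
by rewrite quartic_eq; ring.
Qed.

Lemma quartic_coprime_solution {p m X Y Z : int} : X != 0 ->
  p * X ^+ 4 - m * Y ^+ 4 = Z ^+ 2 ->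
  exists X' Y' Z' : int, [/\ coprimez X' Y', X' != 0 & p * X' ^+ 4 - m * Y' ^+ 4 = Z' ^+ 2].
Proof.
move=> X_neq0 quartic_eq; set g := gcdz X Y.
have g_neq0 : g != 0 by rewrite gcdz_eq0 negb_and X_neq0.
have /dvdzP[X' X_eq] := dvdz_gcdl X Y; have /dvdzP[Y' Y_eq] := dvdz_gcdr X Y.
rewrite -/g in X_eq Y_eq.
have Z2_eq : Z ^+ 2 = (g ^+ 2) ^+ 2 * (p * X' ^+ 4 - m * Y' ^+ 4).
  by rewrite -quartic_eq X_eq Y_eq; ring.
have /dvdzP[Z' Z_eq] : (g ^+ 2 %| Z)%Z.
  by rewrite -(dvdz_pexp2r _ _ (isT : (0 < 2)%N)) Z2_eq dvdz_mulr.
exists X', Y', Z'; split.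
- have g_abs : g = `|g|%:Z by rewrite /g /gcdz absz_nat.
  by apply/eqP/(mulIf g_neq0); rewrite mul1r {1}g_abs mulz_gcdl -X_eq -Y_eq.
- by apply: contraNneq X_neq0 => X'0; rewrite X_eq X'0 mul0r.
- apply: (mulfI (expf_neq0 4 g_neq0)).
  by transitivity (Z ^+ 2); [rewrite Z2_eq | rewrite Z_eq]; ring.
Qed.

Lemma sqr_addM_quartic_eq0 {k y z : rat} : 0 < k -> z ^+ 2 + k * y ^+ 4 = 0 -> y = 0 /\ z = 0.
Proof.
rewrite (exprM y 2 2) => k_gt0 eq0.
have [/eqP z2_0 /eqP y4_0] : z ^+ 2 = 0 /\ (y ^+ 2) ^+ 2 = 0.
  by have := sqr_ge0 z; have := sqr_ge0 (y ^+ 2); split; nra.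
by move: z2_0 y4_0; rewrite !sqrf_eq0 => /eqP-> /eqP->.
Qed.

Definition dot (u v : rat * rat * rat) : rat := u.1.1 * v.1.1 + u.1.2 * v.1.2 + u.2 * v.2.

Definition cross (u v : rat * rat * rat) : rat * rat * rat :=
  (u.1.2 * v.2 - u.2 * v.1.2, u.2 * v.1.1 - u.1.1 * v.2, u.1.1 * v.1.2 - u.1.2 * v.1.1).

Definition comb (s : rat) (u : rat * rat * rat) (t : rat) (v : rat * rat * rat) : rat * rat * rat :=
  (s * u.1.1 + t * v.1.1, s * u.1.2 + t * v.1.2, s * u.2 + t * v.2).

(* [dot (polar p m u) v] is the bilinear form of the quadratic form p x^2 - m y^2 - z^2. *)
Definition polar (p m : rat) (u : rat * rat * rat) : rat * rat * rat :=
  (p * u.1.1, - (m * u.1.2), - u.2).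

(* The second intersection of the conic with the line through P0 in direction D, scaled by
   the value of the quadratic form at D. *)
Definition second_point (p m : rat) (P0 D : rat * rat * rat) : rat * rat * rat :=
  comb (dot (polar p m D) D) P0 (- (2 * dot (polar p m P0) D)) D.

Lemma dot_self_neq0 (u : rat * rat * rat) : nonzero3 u -> dot u u != 0.
Proof.
case: u => [[x y] z] u_neq0; apply/eqP => u0; apply: u_neq0; rewrite /dot /= in u0.
by split; [|split]; rewrite /=; nra.
Qed.

Lemma polar_neq0 (p m : rat) (u : rat * rat * rat) : p != 0 -> m != 0 ->
  nonzero3 u -> nonzero3 (polar p m u).
Proof.
case: u => [[x y] z] p_neq0 m_neq0 u_neq0 [/eqP px [/eqP my /eqP z0]]; apply: u_neq0.
move: px my z0; rewrite /= oppr_eq0 !mulf_eq0 oppr_eq0 (negPf p_neq0) (negPf m_neq0).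
by move=> /eqP-> /eqP-> /eqP->.
Qed.

Lemma nonzero3_of_det (a b u : rat * rat * rat) : dot a (cross b u) != 0 -> nonzero3 u.
Proof.
case: u => [[x y] z] det_neq0; rewrite /nonzero3 /= => -[x0 [y0 z0]].
suff det0 : dot a (cross b (x, y, z)) = 0 by rewrite det0 eqxx in det_neq0.
by rewrite /dot /cross /= x0 y0 z0; ring.
Qed.

Lemma det_proportional (a b u v : rat * rat * rat) : proportional u v ->
  exists l : rat, dot a (cross b v) = l * dot a (cross b u).
Proof.
case: u v => [[u1 u2] u3] [[v1 v2] v3] [l /= [-> [-> ->]]].
by exists l; rewrite /dot /cross /=; ring.
Qed.

Lemma quad_second_point (p m : rat) (P0 D : rat * rat * rat) :
  dot (polar p m (second_point p m P0 D)) (second_point p m P0 D) =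
  dot (polar p m D) D ^+ 2 * dot (polar p m P0) P0.
Proof.
case: P0 D => [[x0 y0] z0] [[d1 d2] d3].
by rewrite /second_point /comb /polar /dot /=; ring.
Qed.

Lemma det_second_point (p m : rat) (P0 D v : rat * rat * rat) :
  dot P0 (cross v (second_point p m P0 D)) = - (2 * dot (polar p m P0) D) * dot P0 (cross v D).
Proof.
case: P0 D v => [[x0 y0] z0] [[d1 d2] d3] [[v1 v2] v3].
by rewrite /second_point /comb /polar /dot /cross /=; ring.
Qed.

Lemma dot_comb (a u v : rat * rat * rat) (s t : rat) :
  dot a (comb s u t v) = s * dot a u + t * dot a v.
Proof. by case: a u v => [[? ?] ?] [[? ?] ?] [[? ?] ?]; rewrite /dot /comb /=; ring. Qed.

Lemma dot_cross_self (a u : rat * rat * rat) : dot a (cross a u) = 0.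
Proof. by case: a u => [[? ?] ?] [[? ?] ?]; rewrite /dot /cross /=; ring. Qed.

Lemma det_comb (a b c : rat * rat * rat) (s t : rat) :
  dot a (cross (comb 1 b s c) (comb 1 b t c)) = (t - s) * dot a (cross b c).
Proof. by case: a b c => [[? ?] ?] [[? ?] ?] [[? ?] ?]; rewrite /dot /cross /comb /=; ring. Qed.

Lemma dot_cross_cross (a b : rat * rat * rat) :
  dot a (cross b (cross b a)) = dot b a ^+ 2 - dot a a * dot b b.
Proof. by case: a b => [[? ?] ?] [[? ?] ?]; rewrite /dot /cross /=; ring. Qed.

Section RationalConic.

Variables (p m : rat) (P0 : rat * rat * rat).
Hypotheses (p_neq0 : p != 0) (m_neq0 : m != 0) (P0_neq0 : nonzero3 P0).
Hypothesis P0_on_conic : dot (polar p m P0) P0 = 0.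

Let l := polar p m P0.
Let F := cross l P0.
(* The polar value [dot l (dir t)] does not depend on t, so [det_point] below makes the
   points [point t] nonzero and pairwise non-proportional. *)
Let dir (t : rat) := comb 1 l t F.
Let point (t : rat) := second_point p m P0 (dir t).

Lemma det_basis_neq0 : dot P0 (cross l F) != 0.
Proof.
rewrite dot_cross_cross [dot l P0]P0_on_conic expr0n sub0r oppr_eq0.
by apply: mulf_neq0; apply: dot_self_neq0 => //; apply: polar_neq0.
Qed.

Lemma det_point s t :
  dot P0 (cross (dir s) (point t)) = - (2 * dot l l) * ((t - s) * dot P0 (cross l F)).
Proof. by rewrite det_second_point -/l dot_comb dot_cross_self mulr0 addr0 mul1r det_comb. Qed.

Lemma infinitely_many_conic_points : exists f : nat -> rat * rat * rat,
  (forall n, nonzero3 (f n) /\ dot (polar p m (f n)) (f n) = 0) /\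
  (forall i j, i <> j -> ~ proportional (f i) (f j)).
Proof.
have ll_neq0 : 2 * dot l l != 0.
  by apply: mulf_neq0 => //; apply: dot_self_neq0; apply: polar_neq0.
have det_neq0 s t : s != t -> dot P0 (cross (dir s) (point t)) != 0.
  by move=> st; rewrite det_point mulf_neq0 ?oppr_eq0 // mulf_neq0 ?det_basis_neq0 // subr_eq0 eq_sym.
exists (fun n => point n%:R); split=> [n | i j ij].
  split; last by rewrite quad_second_point P0_on_conic mulr0.
  apply: (@nonzero3_of_det P0 (dir n.+1%:R)); apply: det_neq0.
  by rewrite eqr_nat eqn_leq ltnn.
case/(det_proportional P0 (dir i%:R)) => k.
have -> : dot P0 (cross (dir i%:R) (point i%:R)) = 0 by rewrite det_point subrr mul0r mulr0.
by rewrite mulr0; apply/eqP/det_neq0; rewrite eqr_nat; apply/eqP.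
Qed.

End RationalConic.

Lemma on_conicE (p m : int) (u : rat * rat * rat) :
  on_conic p m u <-> dot (polar p%:~R m%:~R u) u = 0.
Proof.
have -> : dot (polar p%:~R m%:~R u) u = p%:~R * u.1.1 ^+ 2 - m%:~R * u.1.2 ^+ 2 - u.2 ^+ 2.
  by rewrite /dot /polar /=; ring.
by split=> [-> | /eqP]; [rewrite subrr | rewrite subr_eq0 => /eqP].
Qed.

Lemma infinitely_many_points_of_point {p m : int} {P0 : rat * rat * rat} :
  p != 0 -> m != 0 -> nonzero3 P0 -> on_conic p m P0 -> infinitely_many_points p m.
Proof.
move=> p_neq0 m_neq0 P0_neq0 /on_conicE P0_on.
rewrite -(intr_eq0 rat p) -(intr_eq0 rat m) in p_neq0 m_neq0.
have [f [f_on f_ij]] := infinitely_many_conic_points _ _ _ p_neq0 m_neq0 P0_neq0 P0_on.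
by exists f; split=> // n; have [f_neq0 /on_conicE] := f_on n.
Qed.

Theorem theorem3 (alpha beta gamma a b p m : int)
  (hp : p = alpha ^+ 2 * a ^+ 2 + 2 * beta * a * b + gamma * b ^+ 2)
  (hpprime : zprime p)
  (hm : m = alpha ^+ 2 * gamma - beta ^+ 2) :
  (* (i) *)
  (on_conic p m (alpha%:~R, b%:~R, (alpha ^+ 2 * a + beta * b)%:~R)
   /\ nonzero3 (alpha%:~R, b%:~R, (alpha ^+ 2 * a + beta * b)%:~R)
   /\ (m != 0 -> infinitely_many_points p m))
  /\
  (* (ii) *)
  (zprime m -> (m %% 8)%Z = 1 -> zprime alpha -> (alpha %% 4)%Z = 3 ->
   forall x y z : rat,
     p%:~R * x ^+ 4 - m%:~R * y ^+ 4 = z ^+ 2 -> x = 0 /\ y = 0 /\ z = 0).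
Proof.
have p_neq0 : p != 0 by case/andP: hpprime => /lt0r_neq0.
have P0_on : on_conic p m (alpha%:~R, b%:~R, (alpha ^+ 2 * a + beta * b)%:~R).
  rewrite /on_conic /= -!rmorphXn -!rmorphM -rmorphB; congr (_%:~R).
  by rewrite hp hm; ring.
have P0_neq0 : nonzero3 (alpha%:~R, b%:~R, (alpha ^+ 2 * a + beta * b)%:~R).
  rewrite /nonzero3 /= => -[/eqP alpha0 [/eqP b0 _]].
  move: alpha0 b0 p_neq0; rewrite !intr_eq0 hp => /eqP-> /eqP->.
  by rewrite !(expr0n, mul0r, mulr0, addr0).
split; first do !split=> //.
  by move=> m_neq0; exact: infinitely_many_points_of_point p_neq0 m_neq0 P0_neq0 P0_on.
move=> m_zprime m_mod8 alpha_zprime alpha_mod4 x y z quartic_eq.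
have [x0 | x_neq0] := eqVneq x 0.
  have m_gt0 : (0 : rat) < m%:~R by rewrite ltr0z; case/andP: m_zprime.
  move: quartic_eq; rewrite x0 expr0n mulr0 sub0r => /eqP; rewrite eq_sym -subr_eq0 opprK.
  by move=> /eqP/(sqr_addM_quartic_eq0 m_gt0)[].
have [X [Y [Z [X_neq0 int_eq]]]] := quartic_int_solution x_neq0 quartic_eq.
have [X' [Y' [Z' [coXY X'_neq0 coprime_eq]]]] := quartic_coprime_solution X_neq0 int_eq.
by case: (no_coprime_solution hp hm hpprime m_zprime alpha_zprime m_mod8 alpha_mod4
  coXY X'_neq0 coprime_eq).
Qed.
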